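(* Assume $\mathbf X$ is uniformly distributed on $[0,1]^d$ and $\|Y\|_\infty<\infty$. Assume $K_n,\gamma_1,\gamma_2\to\infty$ with $K_n^2e^{-2\gamma_2}\to0$ and $K_n^4\gamma_2^2\log(\gamma_1)/\gamma_1\to0$. Then $$\mathbb E\int_{[0,1]^d}\big|f_{\lambda^\star}(\mathbf x)-t_{\lambda^\star}(\mathbf x)\big|^2\mu(d\mathbf x)\to0\qquad(n\to\infty).$$
   Context: $(\mathbf X,Y)$ random pair, $\mu$ the law of $\mathbf X$, $\mathscr D_n$ an i.i.d. sample of copies of $(\mathbf X,Y)$ and $\Theta$ an independent randomization. The tree is a randomized CART tree with $K_n$ leaves $L_1,\dots,L_{K_n}$ built from $\Theta$ and $\mathscr D_n$ (axis-aligned binary splits; root $[0,1]^d$; a node with cell $A$ and split $(j,\alpha)$ has left child $\{\mathbf x\in A:x^{(j)}<\alpha\}$ and right child $\{\mathbf x\in A:x^{(j)}\ge\alpha\}$); its $K_n-1$ internal splits are $(j_k,\alpha_k)$. The parameter $\lambda^\star=(\mathbf W_1^\star,\mathbf b_1^\star,\mathbf W_2^\star,\mathbf b_2^\star,\mathbf W_{\rm out}^\star,b^\star_{\rm out})$ is: $\mathbf W_1^\star\in\mathbb R^{d\times(K_n-1)}$ with column $k$ equal to the $j_k$-th unit vector, $(\mathbf b_1^\star)_k=-\alpha_k$; $(\mathbf W_2^\star)_{k,k'}=+1$ (resp. $-1$) if split $k$ is on the root-to-$L_{k'}$ path and that path goes to its right (resp. left) child, $0$ if split $k$ is not on that path;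 $(\mathbf b_2^\star)_{k'}=-\ell(k')+\frac12$ with $\ell(k')$ the depth of $L_{k'}$; $(\mathbf W^\star_{\rm out})_{k'}=\frac12\mathbb E[Y\mid\mathbf X\in L_{k'}]$; $b^\star_{\rm out}=\frac12\sum_{k'}\mathbb E[Y\mid\mathbf X\in L_{k'}]$ (conditional expectations given the tree). With $\tau(u)=2\mathbf 1_{u\ge0}-1$ and $\sigma_i(u)=\tanh(\gamma_iu)$ entrywise, $t_{\lambda^\star}(\mathbf x)=\mathbf W^{\star\top}_{\rm out}\tau(\mathbf W_2^{\star\top}\tau(\mathbf W_1^{\star\top}\mathbf x+\mathbf b_1^\star)+\mathbf b_2^\star)+b^\star_{\rm out}$ and $f_{\lambda^\star}(\mathbf x)=\mathbf W^{\star\top}_{\rm out}\sigma_2(\mathbf W_2^{\star\top}\sigma_1(\mathbf W_1^{\star\top}\mathbf x+\mathbf b_1^\star)+\mathbf b_2^\star)+b^\star_{\rm out}$. The outer expectation is over $\Theta$ and $\mathscr D_n$. *)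

From HB Require Import structures.
From mathcomp Require Import all_boot all_order all_algebra.
From mathcomp Require Import all_classical all_reals all_analysis measurable_realfun.
Set Implicit Arguments. Unset Strict Implicit. Unset Printing Implicit Defensive.
Import Order.TTheory GRing.Theory Num.Theory.
Local Open Scope classical_set_scope.
Local Open Scope ring_scope.

(** Axis-aligned binary trees on [0,1]^d: a node carries a split (j, alpha). *)
Inductive tree (d : nat) (R : Type) :=
| Leaf
| Node of 'I_d & R & tree d R & tree d R.
Arguments Leaf {d R}.

Section Tree.
Variables (d : nat) (R : realType).

Fixpoint splits (t : tree d R) : seq ('I_d * R) :=
  match t with
  | Leaf => [::]
  | Node j a l r => (j, a) :: splits l ++ splits r
  end.

(** For each leaf (in preorder), its root-to-leaf path: a list of
   ((k, (j_k, alpha_k)), went_right) where k is the index of the split in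
   [splits t] (offset [off] for the current subtree). *)
Fixpoint lpaths (t : tree d R) (off : nat) : seq (seq ((nat * ('I_d * R)) * bool)) :=
  match t with
  | Leaf => [:: [::]]
  | Node j a l r =>
      [seq ((off, (j, a)), false) :: p | p <- lpaths l off.+1] ++
      [seq ((off, (j, a)), true) :: p | p <- lpaths r (off.+1 + size (splits l))]
  end.

Definition leaf_paths (t : tree d R) := lpaths t 0.
Definition nleaves (t : tree d R) : nat := size (leaf_paths t).
Definition nsplits (t : tree d R) : nat := size (splits t).

Definition split_of (t : tree d R) (k : 'I_(nsplits t)) : 'I_d * R :=
  tnth (in_tuple (splits t)) k.
Definition path_of (t : tree d R) (k' : 'I_(nleaves t)) :=
  tnth (in_tuple (leaf_paths t)) k'.

Definition cube01 : set (d.-tuple R) := [set x | forall i, 0 <= tnth x i <= 1].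

Definition leaf_cell (t : tree d R) (k' : 'I_(nleaves t)) : set (d.-tuple R) :=
  [set x | cube01 x /\
     forall e, e \in @path_of t k' ->
       if e.2 then e.1.2.2 <= tnth x e.1.2.1 else tnth x e.1.2.1 < e.1.2.2].

Definition depth (t : tree d R) (k' : 'I_(nleaves t)) : nat := size (@path_of t k').

Definition W1s (t : tree d R) : 'M[R]_(d, nsplits t) :=
  \matrix_(i < d, k < nsplits t) (i == (@split_of t k).1)%:R.
Definition b1s (t : tree d R) : 'cV[R]_(nsplits t) :=
  \col_(k < nsplits t) - (@split_of t k).2.
Definition W2s (t : tree d R) : 'M[R]_(nsplits t, nleaves t) :=
  \matrix_(k < nsplits t, k' < nleaves t)
    (if has (fun e => (e.1.1 == val k) && e.2) (@path_of t k') then 1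
     else if has (fun e => (e.1.1 == val k) && ~~ e.2) (@path_of t k') then -1
     else 0).
Definition b2s (t : tree d R) : 'cV[R]_(nleaves t) :=
  \col_(k' < nleaves t) (- (@depth t k')%:R + 2^-1).
Definition Wouts (t : tree d R) (c : 'I_(nleaves t) -> R) : 'cV[R]_(nleaves t) :=
  \col_(k' < nleaves t) (2^-1 * c k').
Definition bouts (t : tree d R) (c : 'I_(nleaves t) -> R) : R :=
  2^-1 * \sum_(k' < nleaves t) c k'.

Definition tau (u : R) : R := 2 * (((0 <= u)%R : bool) : nat)%:R - 1.
Definition tanhR (u : R) : R := (expR u - expR (- u)) / (expR u + expR (- u)).
Definition sigma (g : R) (u : R) : R := tanhR (g * u).

Definition colvec (x : d.-tuple R) : 'cV[R]_d := \col_(i < d) tnth x i.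

Definition net (m K : nat) (act1 act2 : R -> R) (W1 : 'M[R]_(d, m)) (b1 : 'cV[R]_m)
  (W2 : 'M[R]_(m, K)) (b2 : 'cV[R]_K) (Wout : 'cV[R]_K) (bout : R)
  (x : d.-tuple R) : R :=
  (Wout^T *m map_mx act2 (W2^T *m map_mx act1 (W1^T *m colvec x + b1) + b2)) 0 0
  + bout.

Definition t_star (t : tree d R) (c : 'I_(nleaves t) -> R) (x : d.-tuple R) : R :=
  net tau tau (W1s t) (b1s t) (W2s t) (b2s t) (Wouts c) (bouts c) x.
Definition f_star (g1 g2 : R) (t : tree d R) (c : 'I_(nleaves t) -> R)
  (x : d.-tuple R) : R :=
  net (sigma g1) (sigma g2) (W1s t) (b1s t) (W2s t) (b2s t) (Wouts c) (bouts c) x.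

End Tree.

Section Prob.
Local Open Scope ereal_scope.
Context {dO : measure_display} {O : measurableType dO} {R : realType}.

(** elementary conditional expectation E[Y | A] = E[Y 1_A] / P(A)
   (equal to 0 when P(A) = 0, by the convention x / 0 = 0) *)
Definition cond_exp (P : probability O R) (Y : O -> R) (A : set O) : R :=
  (fine (\int[P]_(w in A) (Y w)%:E) / fine (P A))%R.

Definition uniform_cube (d : nat) (P : probability O R) (X : O -> d.-tuple R) : Prop :=
  forall a b : d.-tuple R,
    (forall i, (0 <= tnth a i)%R /\ (tnth a i <= tnth b i)%R /\ (tnth b i <= 1)%R) ->
    P (X @^-1` [set x | forall i, (tnth a i <= tnth x i <= tnth b i)%R])
    = (\prod_(i < d) (tnth b i - tnth a i))%:E.

Definition ess_bounded (P : probability O R) (Y : O -> R) : Prop :=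
  exists M : R, {ae P, forall w, (`|Y w| <= M)%R}.
End Prob.

(** leaf values E[Y | X in L_k'] (tree fixed, (X,Y) an independent copy) *)
Definition leaf_values {dO : measure_display} {O : measurableType dO} {R : realType}
  (d : nat) (P : probability O R) (X : O -> d.-tuple R) (Y : O -> R)
  (t : tree d R) : 'I_(nleaves t) -> R :=
  fun k' => cond_exp P Y (X @^-1` leaf_cell k').
Arguments leaf_values {dO O R d} P X Y t k'.

From HB Require Import structures.
From mathcomp Require Import all_boot all_order all_algebra.
From mathcomp Require Import all_classical all_reals all_analysis measurable_realfun.
From mathcomp Require Import ring lra.
Set Implicit Arguments. Unset Strict Implicit. Unset Printing Implicit Defensive.
Import Order.TTheory GRing.Theory Num.Theory.
Local Open Scope classical_set_scope.
Local Open Scope ring_scope.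

(* With hard thresholds, the second-layer pre-activation of every leaf is a
   half-integer, hence at distance at least 1/2 from 0.  Outside the slabs of
   half-width r = ln g1 / g1 around the K - 1 split hyperplanes, every
   first-layer tanh is within 2 / g1^2 of its threshold, so the second-layer
   pre-activations move by at most e = 2 K / g1^2 and every second-layer tanh is
   within 2 exp(-2 g2 (1/2 - e)) of its threshold; there the error is
   O(K M exp(-g2)).  On the slabs, of uniform measure at most 2 K r, the error
   is at most K M.  Both bounds are uniform in the tree, and the two resulting
   terms O(K^4 g2^2 ln g1 / g1) and O(K^2 exp(-2 g2)) vanish by assumption. *)

Section activations.
Variable R : realType.
Implicit Types g u y : R.

Lemma tauE u : tau u = if 0 <= u then 1 else -1.
Proof. by rewrite /tau; case: ifP => _ /=; lra. Qed.

Lemma normr_tau u : `|tau u| = 1.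
Proof. by rewrite tauE; case: ifP => _; rewrite ?normrN normr1. Qed.

Lemma tau_int u : tau u \is a Num.int.
Proof. by rewrite tauE; case: ifP => _; rewrite ?rpredN rpred1. Qed.

Lemma tanhRN y : tanhR (- y) = - tanhR y.
Proof. by rewrite /tanhR opprK -mulNr opprB [expR y + _]addrC. Qed.

Lemma normr_tanhR_le1 y : `|tanhR y| <= 1.
Proof.
rewrite /tanhR; have a0 := expR_gt0 y; have b0 := expR_gt0 (- y).
rewrite normrM normfV (gtr0_norm (addr_gt0 a0 b0)) ler_pdivrMr ?addr_gt0 //.
by rewrite mul1r ler_norml; apply/andP; split; lra.
Qed.

Lemma tanhR_bounds y : 0 <= 1 - tanhR y <= 2 * expR (- (2 * y)).
Proof.
rewrite /tanhR; have a0 := expR_gt0 y; have b0 := expR_gt0 (- y).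
have ab : expR y * expR (- y) = 1 by rewrite -expRD subrr expR0.
have -> : expR (- (2 * y)) = expR (- y) * expR (- y) by rewrite -expRD; congr expR; lra.
move: a0 b0 ab; set a := expR y; set b := expR (- y) => a0 b0 ab.
have -> : 1 - (a - b) / (a + b) = 2 * b / (a + b) by field; lra.
by rewrite divr_ge0 /= ?ler_pdivrMr; nra.
Qed.

Lemma dist_sigma_tau g u r : 0 < g -> r <= `|u| ->
  `|sigma g u - tau u| <= 2 * expR (- (2 * g * r)).
Proof.
move=> g0 ru; rewrite /sigma tauE.
have decay v : r <= v -> 2 * expR (- (2 * (g * v))) <= 2 * expR (- (2 * g * r)).
  by move=> rv; rewrite ler_pM2l // ler_expR lerN2 -mulrA !ler_pM2l.
case: ifP => u0.
  have /andP[h0 h1] := tanhR_bounds (g * u).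
  by rewrite distrC ger0_norm // (le_trans h1) // decay // -(ger0_norm u0).
have /andP[h0 h1] := tanhR_bounds (g * - u).
have -> : tanhR (g * u) - -1 = 1 - tanhR (g * - u) by rewrite mulrN tanhRN; lra.
by rewrite ger0_norm // (le_trans h1) // decay // -(@ltr0_norm _ u) // ltNge u0.
Qed.

End activations.

Section network.
Variables (d : nat) (R : realType).
Implicit Types (t : tree d R) (x : d.-tuple R).

Lemma netE m K (act1 act2 : R -> R) (W1 : 'M[R]_(d, m)) (b1 : 'cV[R]_m)
    (W2 : 'M[R]_(m, K)) (b2 : 'cV[R]_K) (Wout : 'cV[R]_K) (bout : R) x :
  net act1 act2 W1 b1 W2 b2 Wout bout x =
  \sum_(k' < K) Wout k' 0 * act2 (\sum_(k < m) W2 k k' *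
     act1 ((W1^T *m colvec x + b1) k 0) + b2 k' 0) + bout.
Proof.
rewrite /net !mxE; congr (_ + _); apply: eq_bigr => k' _.
rewrite !mxE; congr (_ * act2 (_ + _)); apply: eq_bigr => k _.
by rewrite !mxE.
Qed.

Lemma preact1E t x k :
  ((W1s t)^T *m colvec x + b1s t) k 0 = tnth x (split_of k).1 - (split_of k).2.
Proof.
rewrite !mxE; congr (_ + _).
rewrite (bigD1 (split_of k).1) //= !mxE eqxx mul1r big1 ?addr0 //.
by move=> i /negbTE ne; rewrite !mxE ne mul0r.
Qed.

Definition preact2 t (act : R -> R) x (k' : 'I_(nleaves t)) : R :=
  \sum_(k < nsplits t) W2s t k k' * act (tnth x (split_of k).1 - (split_of k).2)
  + b2s t k' 0.
Arguments preact2 : clear implicits.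

Lemma f_star_sub_t_star t (c : 'I_(nleaves t) -> R) g1 g2 x :
  f_star g1 g2 c x - t_star c x =
  \sum_(k' < nleaves t) 2^-1 * c k' *
     (sigma g2 (preact2 t (sigma g1) x k') - tau (preact2 t (@tau R) x k')).
Proof.
rewrite /f_star /t_star !netE opprD addrACA subrr addr0 -sumrB.
apply: eq_bigr => k' _; rewrite mxE -mulrBr /preact2.
under eq_bigr do rewrite preact1E.
by under [X in _ - tau (X + _)]eq_bigr do rewrite preact1E.
Qed.

Lemma W2s_int t k k' : W2s t k k' \is a Num.int.
Proof.
by rewrite mxE; case: ifP => _; [|case: ifP => _]; rewrite ?rpredN ?rpred1 ?rpred0.
Qed.

Lemma normr_W2s_le1 t k k' : `|W2s t k k'| <= 1.
Proof.
by rewrite mxE; case: ifP => _; [|case: ifP => _]; rewrite ?normrN ?normr1 ?normr0.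
Qed.

End network.
Arguments preact2 {d R} t act x k'.

Lemma half_le_normr_intrD (R : realType) (z : R) : z \is a Num.int -> 2^-1 <= `|z + 2^-1|.
Proof.
move=> /intrP[m ->]; case: (lerP 0 m) => m0.
  have : (0 : R) <= m%:~R by rewrite ler0z.
  by move=> h; rewrite ger0_norm; lra.
have : m <= -1 by rewrite -ltzD1 addrC subrr.
rewrite -(ler_int R) => h; rewrite ltr0_norm; lra.
Qed.

Section second_layer.
Variables (d : nat) (R : realType).
Implicit Types (t : tree d R) (x : d.-tuple R).

Lemma half_le_normr_preact2_tau t x k' : 2^-1 <= `|preact2 t (@tau R) x k'|.
Proof.
rewrite /preact2 mxE addrA; apply: half_le_normr_intrD.
rewrite rpredB ?rpred_nat //; apply: rpred_sum => k _.
by rewrite rpredM ?W2s_int ?tau_int.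
Qed.

Lemma dist_preact2 t x k' (g e : R) :
  (forall k : 'I_(nsplits t),
    `|sigma g (tnth x (split_of k).1 - (split_of k).2)
      - tau (tnth x (split_of k).1 - (split_of k).2)| <= e) ->
  `|preact2 t (sigma g) x k' - preact2 t (@tau R) x k'| <= (nsplits t)%:R * e.
Proof.
move=> he; rewrite /preact2 opprD addrACA subrr addr0 -sumrB.
have -> : (nsplits t)%:R * e = \sum_(k < nsplits t) e.
  by rewrite sumr_const card_ord mulr_natl.
rewrite (le_trans (ler_norm_sum _ _ _)) //; apply: ler_sum => k _.
by rewrite -mulrBr normrM -[e]mul1r ler_pM ?normr_W2s_le1.
Qed.

End second_layer.

Lemma tau_eq_of_dist (R : realType) (z z' : R) : `|z - z'| < `|z'| -> tau z = tau z'.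
Proof.
rewrite !tauE ltr_distl; case: (lerP 0 z') => a; case: (lerP 0 z) => b //.
  by rewrite (ger0_norm a); lra.
by rewrite (ltr0_norm a); lra.
Qed.

Lemma dist_sigma_tau_near (R : realType) (g z z' r s : R) : 0 < g ->
  s <= `|z'| -> `|z - z'| <= r -> r < s ->
  `|sigma g z - tau z'| <= 2 * expR (- (2 * g * (s - r))).
Proof.
move=> g0 sz' zz' rs; rewrite -(tau_eq_of_dist (lt_le_trans (le_lt_trans zz' rs) sz')).
apply: dist_sigma_tau => //; have := lerB_dist z' z; rewrite distrC; lra.
Qed.

Lemma normr_sum_half_le (R : realType) n (c a : 'I_n -> R) (M B : R) :
  (forall i, `|c i| <= M) -> (forall i, `|a i| <= 2 * B) ->
  `|\sum_(i < n) 2^-1 * c i * a i| <= n%:R * M * B.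
Proof.
move=> hc ha; rewrite (le_trans (ler_norm_sum _ _ _)) //.
have -> : n%:R * M * B = \sum_(i < n) M * B.
  by rewrite sumr_const card_ord -mulrA mulr_natl.
apply: ler_sum => i _; rewrite !normrM (ger0_norm (_ : 0 <= 2^-1 :> R)) ?invr_ge0 ?ler0n //.
have := hc i; have := ha i; have := normr_ge0 (c i); have := normr_ge0 (a i); nra.
Qed.

Section pointwise.
Variables (d : nat) (R : realType).
Implicit Types (t : tree d R) (x : d.-tuple R).

Definition slab (s : 'I_d * R) (r : R) : set (d.-tuple R) :=
  [set x | `|tnth x s.1 - s.2| < r].

Lemma normr_f_star_sub_t_star_le t (c : 'I_(nleaves t) -> R) (M g1 g2 : R) x :
  (forall k', `|c k'| <= M) ->
  `|f_star g1 g2 c x - t_star c x| <= (nleaves t)%:R * M.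
Proof.
move=> hc; rewrite f_star_sub_t_star -[X in _ <= X]mulr1.
apply: normr_sum_half_le => // k'; rewrite (le_trans (ler_normB _ _)) // normr_tau.
by have := normr_tanhR_le1 (g2 * preact2 t (sigma g1) x k'); rewrite /sigma; lra.
Qed.

Lemma normr_f_star_sub_t_star_off_slabs t (c : 'I_(nleaves t) -> R) (M g1 g2 r : R) x :
  (forall k', `|c k'| <= M) -> 0 < g1 -> 0 < g2 ->
  (nsplits t)%:R * (2 * expR (- (2 * g1 * r))) < 2^-1 ->
  (forall k : 'I_(nsplits t), ~ slab (split_of k) r x) ->
  `|f_star g1 g2 c x - t_star c x| <= (nleaves t)%:R * M *
    expR (- (2 * g2 * (2^-1 - (nsplits t)%:R * (2 * expR (- (2 * g1 * r)))))).
Proof.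
move=> hc g10 g20 he hx; rewrite f_star_sub_t_star.
apply: normr_sum_half_le => // k'; apply: dist_sigma_tau_near => //.
  exact: half_le_normr_preact2_tau.
apply: dist_preact2 => k; apply: dist_sigma_tau => //.
by rewrite leNgt; apply/negP => /hx.
Qed.

Lemma sqr_f_star_sub_t_star_le t (c : 'I_(nleaves t) -> R) (M g1 g2 r : R) x :
  (forall k', `|c k'| <= M) -> 0 < g1 -> 0 < g2 ->
  (nsplits t)%:R * (2 * expR (- (2 * g1 * r))) < 2^-1 ->
  (f_star g1 g2 c x - t_star c x) ^+ 2 <=
    ((nleaves t)%:R * M) ^+ 2 * \sum_(k < nsplits t) \1_(slab (split_of k) r) x
    + ((nleaves t)%:R * M *
       expR (- (2 * g2 * (2^-1 - (nsplits t)%:R * (2 * expR (- (2 * g1 * r))))))) ^+ 2.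
Proof.
move=> hc g10 g20 he.
have sqr_le (v B : R) : `|v| <= B -> v ^+ 2 <= B ^+ 2.
  by rewrite ler_norml => /andP[? ?]; nra.
case: (pselect (exists k : 'I_(nsplits t), slab (split_of k) r x)) => [[k xk]|nx].
  have sum1 : 1 <= \sum_(k < nsplits t) \1_(slab (split_of k) r) x :> R.
    rewrite (bigD1 k) //= indicE mem_set // lerDl.
    by apply: sumr_ge0 => i _; rewrite indicE ler0n.
  apply: ler_wpDr; first exact: sqr_ge0.
  apply: le_trans (sqr_le _ _ (normr_f_star_sub_t_star_le g1 g2 x hc)) _.
  by rewrite ler_peMr ?sqr_ge0.
rewrite big1 ?mulr0 ?add0r; last first.
  by move=> k _; rewrite indicE memNset // => xk; apply: nx; exists k.
by apply/sqr_le/normr_f_star_sub_t_star_off_slabs => // k xk; apply: nx; exists k.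
Qed.

End pointwise.

Lemma measurable_forall_in (dT : measure_display) (T : measurableType dT)
    (A : eqType) (s : seq A) (Q : A -> set T) :
  (forall e, measurable (Q e)) -> measurable [set x | forall e, e \in s -> Q e x].
Proof.
move=> mQ; have -> : [set x | forall e, e \in s -> Q e x] = \bigcap_(e in [set` s]) Q e.
  by apply/seteqP; split => x /= h e; apply: h.
by apply: fin_bigcap_measurable => // ; exact: finite_seq.
Qed.

Section measurability.
Variables (d : nat) (R : realType).

Lemma measurable_tnth_itv (i : interval R) (j : 'I_d) :
  measurable [set x : d.-tuple R | tnth x j \in i].
Proof. by have := measurable_tnth j measurableT (measurable_itv i); rewrite setTI. Qed.

Lemma measurable_box (a b : d.-tuple R) :
  measurable [set x : d.-tuple R | forall i, tnth a i <= tnth x i <= tnth b i].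
Proof.
have -> : [set x : d.-tuple R | forall i, tnth a i <= tnth x i <= tnth b i] =
    \bigcap_(i in [set: 'I_d]) [set x | tnth x i \in `[tnth a i, tnth b i]].
  apply/seteqP; split => x /= h i; first by rewrite /= in_itv /= h.
  by have := h i I; rewrite /= in_itv.
apply: fin_bigcap_measurable => [|i _]; first exact: finite_finset.
exact: measurable_tnth_itv.
Qed.

Lemma measurable_cube01 : measurable (@cube01 d R).
Proof.
have -> : @cube01 d R = [set x | forall i,
    tnth [tuple of nseq d 0] i <= tnth x i <= tnth [tuple of nseq d 1] i].
  by apply/seteqP; split => x /= h i; have := h i; rewrite !tnth_nseq.
exact: measurable_box.
Qed.

Lemma measurable_leaf_cell (t : tree d R) (k' : 'I_(nleaves t)) :
  measurable (leaf_cell k').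
Proof.
have -> : leaf_cell k' = @cube01 d R `&` [set x | forall e, e \in path_of k' ->
    [set y : d.-tuple R | tnth y e.1.2.1 \in
       (if e.2 then `[e.1.2.2, +oo[ else `]-oo, e.1.2.2[)%R] x].
  apply/seteqP; split => x /= [cx hx]; split => // e /hx;
    by case: e.2; rewrite in_itv /= ?andbT.
apply: measurableI; first exact: measurable_cube01.
by apply: measurable_forall_in => e; exact: measurable_tnth_itv.
Qed.

Lemma measurable_slab (s : 'I_d * R) (r : R) : measurable (slab s r).
Proof.
have -> : slab s r = [set x | tnth x s.1 \in `]s.2 - r, s.2 + r[].
  by apply/seteqP; split => x; rewrite /slab /= in_itv /= ltr_distl.
exact: measurable_tnth_itv.
Qed.

End measurability.

Section uniform.
Variables (d : nat) (R : realType) (dO : measure_display) (O : measurableType dO).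
Variables (P0 : probability O R) (X : {RV P0 >-> d.-tuple R}).
Hypothesis unifX : uniform_cube P0 X.

Lemma distribution_slab_le (s : 'I_d * R) (r : R) : 0 < r ->
  (distribution P0 X (slab s r `&` @cube01 d R) <= (2 * r)%:E)%E.
Proof.
move=> r0; set lo := Num.max 0 (s.2 - r); set hi := Num.min 1 (s.2 + r).
have lo0 : 0 <= lo by rewrite le_max lexx.
have hi1 : hi <= 1 by rewrite ge_min lexx.
have loE : s.2 - r <= lo by rewrite le_max lexx orbT.
have hiE : hi <= s.2 + r by rewrite ge_min lexx orbT.
have slab_itv x : (slab s r `&` @cube01 d R) x -> lo <= tnth x s.1 <= hi.
  move=> [+ /(_ s.1)/andP[c0 c1]]; rewrite /slab /= ltr_distl => /andP[h0 h1].
  by rewrite ge_max le_min c0 c1 /=; apply/andP; split; lra.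
case: (lerP lo hi) => hlh; last first.
  have -> : slab s r `&` @cube01 d R = set0.
    by apply/seteqP; split => x // /slab_itv; lra.
  by rewrite measure0 lee_fin; lra.
pose a := [tuple (if i == s.1 then lo else 0) | i < d].
pose b := [tuple (if i == s.1 then hi else 1) | i < d].
have sub : slab s r `&` @cube01 d R `<=`
    [set x : d.-tuple R | forall i, tnth a i <= tnth x i <= tnth b i].
  move=> x hx i; rewrite !tnth_mktuple; case: eqP => [->|_]; first exact: slab_itv.
  by case: hx => _ /(_ i).
apply: (le_trans (le_measure _ _ _ sub)).
- by rewrite inE; apply: measurableI; [exact: measurable_slab|exact: measurable_cube01].
- by rewrite inE; exact: measurable_box.
change (P0 (X @^-1` [set x | forall i, (tnth a i <= tnth x i <= tnth b i)%R])
  <= (2 * r)%:E)%E.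
rewrite unifX; last first.
  by move=> i; rewrite !tnth_mktuple; case: eqP => _; lra.
rewrite lee_fin (bigD1 s.1) //= !tnth_mktuple eqxx big1 ?mulr1; first lra.
by move=> i /negbTE ne; rewrite !tnth_mktuple ne subr0.
Qed.

End uniform.

Section le_integral_ge0.
Local Open Scope ereal_scope.

(* Unlike [ge0_le_integral], no measurability is required: for nonnegative
   functions the integral is a supremum over the simple functions below. *)
Lemma le_integral_ge0 (dT : measure_display) (T : measurableType dT) (R : realType)
    (mu : {measure set T -> \bar R}) (D : set T) (f1 f2 : T -> \bar R) :
  (forall x, D x -> 0 <= f1 x) -> (forall x, D x -> f1 x <= f2 x) ->
  \int[mu]_(x in D) f1 x <= \int[mu]_(x in D) f2 x.
Proof.
move=> f10 f12; have f20 x : D x -> 0 <= f2 x.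
  by move=> Dx; exact: le_trans (f10 _ Dx) (f12 _ Dx).
rewrite /integral; have -> : (f1 \_ D)^\- = (f2 \_ D)^\-.
  apply/funext => x; rewrite /patch !funenegE; case: ifP => // /set_mem Dx.
  by rewrite !max_r // leeNl oppe0 ?f10 ?f20.
apply: leeB => //; apply: ereal_sup_le => _ [h /= hle <-]; exists h => //= x.
apply: le_trans (hle x) _; rewrite /patch !funeposE; case: ifP => [/set_mem Dx|_] //.
by apply: le_max2 => //; exact: f12.
Qed.

End le_integral_ge0.

Section integral_slabs.
Local Open Scope ereal_scope.

Lemma integral_slabs_le (d : nat) (R : realType) (dO : measure_display)
    (O : measurableType dO) (P0 : probability O R) (X : {RV P0 >-> d.-tuple R})
    (t : tree d R) (A B r : R) :
  uniform_cube P0 X -> (0 <= A)%R -> (0 <= B)%R -> (0 < r)%R ->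
  \int[distribution P0 X]_(x in @cube01 d R)
     (A * \sum_(k < nsplits t) \1_(slab (split_of k) r) x + B)%:E
   <= (A * ((nsplits t)%:R * (2 * r)) + B)%:E.
Proof.
move=> unifX A0 B0 r0; have mc := @measurable_cube01 d R.
have mind k : measurable_fun (@cube01 d R) (fun x => (A * \1_(slab (split_of k) r) x)%:E).
  apply/measurable_EFinP/measurable_funM; first exact: measurable_cst.
  by apply: measurable_indic; exact: measurable_slab.
have ind0 k x : 0 <= (A * \1_(slab (split_of k) r) x)%:E.
  by rewrite lee_fin mulr_ge0 // indicE ler0n.
rewrite (eq_integral (fun x =>
    \sum_(k < nsplits t) (A * \1_(slab (split_of k) r) x)%:E + B%:E)); last first.
  by move=> x _; rewrite EFinD mulr_sumr sumEFin.
rewrite ge0_integralD //; last 2 first.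
- by move=> x _; apply: sume_ge0.
- exact: emeasurable_sum.
rewrite ge0_integral_sum // integral_cst // EFinD; apply: leeD; last first.
  by rewrite -[X in _ <= X]mule1 lee_wpmul2l ?lee_fin ?probability_le1.
have -> : (A * ((nsplits t)%:R * (2 * r)))%:E = \sum_(k < nsplits t) (A * (2 * r))%:E.
  by rewrite sumEFin sumr_const card_ord mulr_natl mulrnAr.
apply: lee_sum => k _; under eq_integral do rewrite EFinM.
rewrite ge0_integralZl_EFin //; last first.
  by apply/measurable_EFinP/measurable_indic; exact: measurable_slab.
rewrite integral_indic ?EFinM ?lee_wpmul2l ?lee_fin //; last exact: measurable_slab.
exact: distribution_slab_le.
Qed.

End integral_slabs.

Lemma normr_cond_exp_le (R : realType) (dO : measure_display) (O : measurableType dO)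
    (P0 : probability O R) (Y : {RV P0 >-> R}) (A : set O) (M : R) :
  measurable A -> 0 <= M -> {ae P0, forall w, `|Y w| <= M} ->
  `|cond_exp P0 Y A| <= M.
Proof.
move=> mA M0 YM.
have PA : P0 A = (fine (P0 A))%:E by rewrite fineK ?fin_num_measure.
move: PA; set p := fine (P0 A) => PA.
have p0 : 0 <= p by rewrite -lee_fin -PA.
have mY : measurable_fun A (fun w => (Y w)%:E).
  by apply/measurable_EFinP; exact: measurable_funS (measurable_funPT Y).
have : (`| \int[P0]_(w in A) (Y w)%:E | <= (M * p)%:E)%E.
  rewrite (le_trans (le_abse_integral _ _ mY)) // EFinM -PA integral_le_bound //.
  by apply: filterS YM => w hw _ /=; rewrite lee_fin.
rewrite /cond_exp PA /=; case: (\int[P0]_(w in A) (Y w)%:E)%E => [y| |] //=.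
rewrite lee_fin => yM; have [->|pn0] := eqVneq p 0; first by rewrite invr0 mulr0 normr0.
have pp : 0 < p by rewrite lt_neqAle eq_sym pn0 p0.
by rewrite normrM normfV (gtr0_norm pp) ler_pdivrMr.
Qed.

Section real_bounds.
Variable R : realType.

Lemma expRN_mul_ln_div (g : R) : 0 < g -> expR (- (2 * g * (ln g / g))) = (g ^+ 2)^-1.
Proof.
move=> g0; have -> : 2 * g * (ln g / g) = ln g + ln g by field; rewrite gt_eqF.
by rewrite opprD expRD !expRN lnK ?posrE // expr2 invfM.
Qed.

Lemma one_le_ln (g : R) : expR 1 <= g -> 1 <= ln g.
Proof.
move=> eg; rewrite -[1](@expRK R) ler_ln ?posrE ?expR_gt0 //.
exact: lt_le_trans (expR_gt0 1) eg.
Qed.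

Lemma two_le_expR1 : 2 <= expR 1 :> R.
Proof. by have := expR_ge1Dx (1 : R); lra. Qed.

Lemma mul_le_of_rate_le1 (Kr g1 g2 : R) : 1 <= Kr -> expR 1 <= g1 -> 1 <= g2 ->
  Kr ^+ 4 * g2 ^+ 2 * ln g1 / g1 <= 1 -> Kr * g2 <= g1.
Proof.
move=> K1 g1e g21; have g10 : 0 < g1 by have := two_le_expR1; lra.
rewrite ler_pdivrMr // mul1r => hQ; apply: le_trans hQ.
have L1 := one_le_ln g1e.
have K4 : Kr <= Kr ^+ 4 by rewrite (exprS Kr 3) ler_peMr ?exprn_ege1 //; lra.
have g22 : g2 <= g2 ^+ 2 by rewrite expr2; nra.
have : Kr * g2 <= Kr ^+ 4 * g2 ^+ 2 by apply: ler_pM; lra.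
have : 0 <= Kr ^+ 4 * g2 ^+ 2 by rewrite mulr_ge0 ?exprn_ge0 //; lra.
nra.
Qed.

Lemma first_layer_err_le (Kr m g1 g2 : R) : 0 <= m <= Kr -> 2 <= g1 ->
  Kr * g2 <= g1 -> 0 <= g2 -> g2 * (m * (2 / g1 ^+ 2)) <= 1.
Proof.
move=> /andP[m0 mK] g12 Kg g20; have g10 : 0 < g1 by lra.
have -> : g2 * (m * (2 / g1 ^+ 2)) = (g2 * m) * (2 / g1 ^+ 2) by ring.
have gm : g2 * m <= g1 by nra.
have e0 : 0 <= 2 / g1 ^+ 2 by rewrite divr_ge0 ?sqr_ge0.
rewrite (le_trans (ler_wpM2r e0 gm)) // (_ : g1 * (2 / g1 ^+ 2) = 2 / g1).
  by rewrite ler_pdivrMr // mul1r.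
by field; rewrite gt_eqF.
Qed.

(* The second-layer threshold [1/2] is only shifted by the first-layer error
   [e], which costs the constant factor [expR 4] once [g2 * e <= 1]. *)
Lemma sqr_second_layer_err_le (Kr M g2 e : R) : g2 * e <= 1 ->
  (Kr * M * expR (- (2 * g2 * (2^-1 - e)))) ^+ 2 <=
  expR 4 * M ^+ 2 * (Kr ^+ 2 * expR (- (2 * g2))).
Proof.
move=> ge1; rewrite exprMn -expRM_natl.
have -> : 2%:R * - (2 * g2 * (2^-1 - e)) = - (2 * g2) + 4 * (g2 * e).
  by rewrite -[2%:R]/2; lra.
have h4 : expR (4 * (g2 * e)) <= expR 4 by rewrite ler_expR; lra.
rewrite expRD (mulrA ((Kr * M) ^+ 2))
  [X in _ <= X](_ : _ = (Kr * M) ^+ 2 * expR (- (2 * g2)) * expR 4).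
  by apply: ler_wpM2l => //; rewrite mulr_ge0 ?sqr_ge0 ?expR_ge0.
by rewrite exprMn; ring.
Qed.

Lemma slab_err_le (Kr M m g1 g2 L : R) : 0 <= m <= Kr -> 1 <= Kr -> 1 <= g2 ->
  0 <= L -> 0 < g1 ->
  (Kr * M) ^+ 2 * (m * (2 * (L / g1))) <=
  2 * M ^+ 2 * (Kr ^+ 4 * g2 ^+ 2 * L / g1).
Proof.
move=> /andP[m0 mK] K1 g21 L0 g10; set C := 2 * M ^+ 2 * (L / g1).
have -> : (Kr * M) ^+ 2 * (m * (2 * (L / g1))) = C * (Kr ^+ 2 * m).
  by rewrite /C exprMn; ring.
have -> : 2 * M ^+ 2 * (Kr ^+ 4 * g2 ^+ 2 * L / g1) = C * (Kr ^+ 4 * g2 ^+ 2).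
  by rewrite /C; ring.
apply: ler_wpM2l.
  exact: mulr_ge0 (mulr_ge0 (ler0n _ 2) (sqr_ge0 M)) (divr_ge0 L0 (ltW g10)).
have K2 : 0 <= Kr ^+ 2 by exact: sqr_ge0.
have K34 : Kr ^+ 3 <= Kr ^+ 4 by rewrite (exprSr Kr 3) ler_peMr ?exprn_ge0 //; lra.
have K4g : Kr ^+ 4 <= Kr ^+ 4 * g2 ^+ 2.
  by rewrite ler_peMr ?exprn_ge0 ?exprn_ege1 //; lra.
have : Kr ^+ 2 * m <= Kr ^+ 3 by rewrite (exprSr Kr 2) ler_wpM2l.
lra.
Qed.

End real_bounds.

Lemma nleavesE (d : nat) (R : realType) (t : tree d R) : nleaves t = (nsplits t).+1.
Proof.
suff size_lpaths off : size (lpaths t off) = (nsplits t).+1 by exact: size_lpaths.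
rewrite /nsplits; elim: t off => [|j a l IHl r IHr] off //=.
by rewrite size_cat !size_map IHl IHr size_cat addSn addnS.
Qed.

Lemma integral_sqr_f_star_sub_t_star_le (d : nat) (R : realType) (dO : measure_display)
    (O : measurableType dO) (P0 : probability O R) (X : {RV P0 >-> d.-tuple R})
    (t : tree d R) (c : 'I_(nleaves t) -> R) (M g1 g2 : R) :
  uniform_cube P0 X -> 0 <= M -> (forall k', `|c k'| <= M) ->
  expR 1 <= g1 -> 4 <= g2 ->
  (nleaves t)%:R ^+ 4 * g2 ^+ 2 * ln g1 / g1 <= 1 ->
  (\int[distribution P0 X]_(x in @cube01 d R)
      ((f_star g1 g2 c x - t_star c x) ^+ 2)%:E
   <= (2 * M ^+ 2 * ((nleaves t)%:R ^+ 4 * g2 ^+ 2 * ln g1 / g1) +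
      expR 4 * M ^+ 2 * ((nleaves t)%:R ^+ 2 * expR (- (2 * g2))))%:E)%E.
Proof.
move=> unifX M0 cM g1e g24 rate.
set Kr := (nleaves t)%:R in rate *; set m := (nsplits t)%:R : R.
have mK : 0 <= m <= Kr by rewrite /m /Kr nleavesE ler0n ler_nat /=.
have K1 : 1 <= Kr by rewrite /Kr nleavesE ler1n.
have g12 : 2 <= g1 by have := two_le_expR1 R; lra.
have L1 := one_le_ln g1e.
have e1 : g2 * (m * (2 / g1 ^+ 2)) <= 1.
  apply: (first_layer_err_le mK) => //; last lra.
  by apply: mul_le_of_rate_le1 => //; lra.
set r := ln g1 / g1.
have r0 : 0 < r by rewrite divr_gt0; lra.
have eE : m * (2 * expR (- (2 * g1 * r))) = m * (2 / g1 ^+ 2).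
  by rewrite expRN_mul_ln_div //; lra.
pose A := (Kr * M) ^+ 2.
pose B := (Kr * M * expR (- (2 * g2 * (2^-1 - m * (2 * expR (- (2 * g1 * r))))))) ^+ 2.
apply: (@le_trans _ _ (\int[distribution P0 X]_(x in @cube01 d R)
   (A * \sum_(k < nsplits t) \1_(slab (split_of k) r) x + B)%:E)%E).
  apply: le_integral_ge0 => [x _|x _]; rewrite lee_fin ?sqr_ge0 //.
  apply: sqr_f_star_sub_t_star_le => //; [lra|lra|].
  have e0 : 0 <= m * (2 / g1 ^+ 2) by rewrite mulr_ge0 ?divr_ge0 ?sqr_ge0; lra.
  by rewrite -/m eE; nra.
apply: (le_trans (integral_slabs_le t unifX (sqr_ge0 _) (sqr_ge0 _) r0)).
rewrite lee_fin; apply: lerD; first by apply: slab_err_le => //; lra.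
by rewrite /B eE; exact: sqr_second_layer_err_le.
Qed.

Section integral_cvg0.
Local Open Scope ereal_scope.

Lemma integral_cvg0_of_unif_le (dO : measure_display) (Om : measurableType dO)
    (R : realType) (P : probability Om R) (f : nat -> Om -> \bar R) (u : nat -> R) :
  (forall n w, 0 <= f n w) -> (\forall n \near \oo, forall w, f n w <= (u n)%:E) ->
  u n @[n --> \oo] --> 0%R ->
  (fun n => \int[P]_w f n w) @ \oo --> 0.
Proof.
move=> f0 fu u0; apply: (@squeeze_cvge _ _ _ _ (fun _ => 0) _ (fun n => (u n)%:E)).
- near=> n; rewrite integral_ge0 //=.
  have fun_le : forall w, f n w <= (u n)%:E by near: n.
  rewrite -[(u n)%:E]mule1 -(probability_setT P) -integral_cst //.
  by apply: le_integral_ge0 => w _.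
- exact: cvg_cst.
- by apply/fine_cvgP; split; [exact: nearW|exact: u0].
Unshelve. all: end_near.
Qed.

End integral_cvg0.

Theorem proposition2 (d : nat) (R : realType)
  (d0 : measure_display) (O0 : measurableType d0) (P0 : probability O0 R)
  (X : {RV P0 >-> d.-tuple R}) (Y : {RV P0 >-> R})
  (dO : measure_display) (Om : measurableType dO) (P : probability Om R)
  (K : nat -> nat) (g1 g2 : nat -> R) (T : nat -> Om -> tree d R) :
  uniform_cube P0 X ->
  ess_bounded P0 Y ->
  (forall n w, nleaves (T n w) = K n) ->
  ((K n)%:R : R) @[n --> \oo] --> +oo ->
  g1 n @[n --> \oo] --> +oo ->
  g2 n @[n --> \oo] --> +oo ->
  ((K n)%:R ^+ 2 * expR (- (2 * g2 n))) @[n --> \oo] --> 0 ->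
  ((K n)%:R ^+ 4 * g2 n ^+ 2 * ln (g1 n) / g1 n) @[n --> \oo] --> 0 ->
  let err (n : nat) (w : Om) : \bar R :=
    (\int[distribution P0 X]_(x in @cube01 d R)
      ((f_star (g1 n) (g2 n) (leaf_values P0 X Y (T n w)) x
        - t_star (leaf_values P0 X Y (T n w)) x) ^+ 2)%:E)%E in
  (forall n, measurable_fun [set: Om] (fun w => err n w : \bar R)) ->
  (fun n => (\int[P]_w err n w)%E) @ \oo --> 0%E.
Proof.
move=> unifX [M1 YM1] KT _ g1oo g2oo rate2 rate4 err _.
pose M := Num.max M1 0; have M0 : 0 <= M by rewrite le_max lexx orbT.
have leafM n w k' : `|leaf_values P0 X Y (T n w) k'| <= M.
  apply: normr_cond_exp_le => //; last by apply: filterS YM1 => y; rewrite le_max => ->.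
  by apply: measurable_funPTI; exact: measurable_leaf_cell.
pose bound n := 2 * M ^+ 2 * ((K n)%:R ^+ 4 * g2 n ^+ 2 * ln (g1 n) / g1 n)
  + expR 4 * M ^+ 2 * ((K n)%:R ^+ 2 * expR (- (2 * g2 n))).
have bound0 : bound n @[n --> \oo] --> 0.
  rewrite -[0]addr0; apply: cvgD.
    by rewrite -(mulr0 (2 * M ^+ 2)); apply: cvgMl_tmp.
  by rewrite -(mulr0 (expR 4 * M ^+ 2)); apply: cvgMl_tmp.
apply: (@integral_cvg0_of_unif_le _ _ _ P err _ _ _ bound0).
  by move=> n w; apply: integral_ge0 => x _; rewrite lee_fin sqr_ge0.
have g1e : \forall n \near \oo, expR 1 <= g1 n by move/cvgryPge : g1oo; apply.
have g24 : \forall n \near \oo, 4 <= g2 n by move/cvgryPge : g2oo; apply.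
have rate1 : \forall n \near \oo, (K n)%:R ^+ 4 * g2 n ^+ 2 * ln (g1 n) / g1 n <= 1.
  by move/cvgr_le : rate4; apply; exact: ltr01.
near=> n => w; rewrite /err /bound -(KT n w).
apply: integral_sqr_f_star_sub_t_star_le => //; rewrite ?KT; near: n => //.
Unshelve. all: end_near.
Qed.
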